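(* For any sequence of groups $(G_n)_{n\in\mathbb N}$, the archipelago group is a direct limit $$\mathcal A(G_n)=\varinjlim_k \circledast_{i\ge k}G_i,$$ where the bonding maps are the quotient maps $\circledast_{i\ge k}G_i\to(\circledast_{i\ge k}G_i)/\langle\langle G_k\rangle\rangle\cong\circledast_{i\ge k+1}G_i$ (i.e. the maps deleting all letters from $G_k$).
   Context: For a sequence of groups $(G_n)_{n\in\mathbb N}$, an infinite word is a map $w:L\to\bigsqcup_n (G_n\setminus\{1\})$ from a countable linearly ordered set $L$ such that $w^{-1}(G_n)$ is finite for every $n$. Two infinite words are equivalent if for every $m$ their restrictions to the letters from $G_1,\dots,G_m$ represent the same element of $G_1*\cdots*G_m$. The topologist's product $\circledast_n G_n$ is the group of equivalence classes, with multiplication induced by concatenation and inversion by reversing the order and inverting each letter; $\circledast_{i\ge k}G_i$ is the same construction for the subsequence $(G_i)_{i\ge k}$. The free product $*_n G_n$ is the subgroup of classes of finite words. The archipelago group is $\mathcal A(G_n):=\circledast_n G_n/\langle\langle *_n G_n\rangle\rangle$, $\langle\langle\cdot\rangle\rangle$ denoting normal closure. *)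

From Stdlib Require Import List Sorting.Sorted Relations.Relation_Operators.
Import ListNotations.

Record Group := {
  gcar :> Type;
  gmul : gcar -> gcar -> gcar;
  ginv : gcar -> gcar;
  gone : gcar;
  gmulA : forall x y z, gmul x (gmul y z) = gmul (gmul x y) z;
  gmul1 : forall x, gmul gone x = x;
  gmulV : forall x, gmul (ginv x) x = gone
}.

Section Words.
Variable G : nat -> Group.

Definition letter := {n : nat & gcar (G n)}.
Definition lidx (a : letter) : nat := projT1 a.

Inductive fp_step : list letter -> list letter -> Prop :=
| fp_merge : forall (u v : list letter) (n : nat) (a b : gcar (G n)),
    fp_step (u ++ existT _ n a :: existT _ n b :: v)
            (u ++ existT _ n (gmul (G n) a b) :: v)
| fp_drop : forall (u v : list letter) (n : nat),
    fp_step (u ++ existT _ n (gone (G n)) :: v) (u ++ v).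

Definition fp_eq : list letter -> list letter -> Prop :=
  clos_refl_sym_trans (list letter) fp_step.

Record infword := {
  ipos : Type;
  ilt : ipos -> ipos -> Prop;
  iw : ipos -> letter
}.

Definition wf_word (k : nat) (w : infword) : Prop :=
  (forall x, ~ ilt w x x) /\
  (forall x y z, ilt w x y -> ilt w y z -> ilt w x z) /\
  (forall x y, ilt w x y \/ x = y \/ ilt w y x) /\
  (exists f : ipos w -> nat, forall x y, f x = f y -> x = y) /\
  (forall n, exists s : list (ipos w), forall l, lidx (iw w l) = n -> In l s) /\
  (forall l, projT2 (iw w l) <> gone (G (projT1 (iw w l)))) /\
  (forall l, k <= lidx (iw w l)).

Definition restr (w : infword) (m : nat) (s : list letter) : Prop :=
  exists ls : list (ipos w),
    StronglySorted (ilt w) ls /\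
    (forall l, In l ls <-> lidx (iw w l) <= m) /\
    s = map (iw w) ls.

Definition word_eqv (w v : infword) : Prop :=
  forall m s1 s2, restr w m s1 -> restr v m s2 -> fp_eq s1 s2.

Definition word_mul (w v : infword) : infword := {|
  ipos := (ipos w + ipos v)%type;
  ilt := fun x y => match x, y with
                    | inl a, inl b => ilt w a b
                    | inr a, inr b => ilt v a b
                    | inl _, inr _ => True
                    | inr _, inl _ => False
                    end;
  iw := fun x => match x with inl a => iw w a | inr b => iw v b end |}.

Definition word_inv (w : infword) : infword := {|
  ipos := ipos w;
  ilt := fun x y => ilt w y x;
  iw := fun x => existT _ (projT1 (iw w x)) (ginv _ (projT2 (iw w x))) |}.

Definition word_one : infword := {|
  ipos := Empty_set;
  ilt := fun _ _ => False;
  iw := fun x => match x with end |}.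

Definition finite_word (w : infword) : Prop :=
  exists s : list (ipos w), forall l, In l s.

Definition delete (k : nat) (w : infword) : infword := {|
  ipos := {l : ipos w | lidx (iw w l) <> k};
  ilt := fun a b => ilt w (proj1_sig a) (proj1_sig b);
  iw := fun a => iw w (proj1_sig a) |}.

End Words.

Record PreGrp := {
  pcar : Type;
  pmem : pcar -> Prop;
  peqv : pcar -> pcar -> Prop;
  pmul : pcar -> pcar -> pcar;
  pinv : pcar -> pcar;
  pone : pcar
}.

(* the members, modulo peqv, form a group under the operations *)
Definition is_group (P : PreGrp) : Prop :=
  pmem P (pone P) /\
  (forall x y, pmem P x -> pmem P y -> pmem P (pmul P x y)) /\
  (forall x, pmem P x -> pmem P (pinv P x)) /\
  (forall x, pmem P x -> peqv P x x) /\
  (forall x y, pmem P x -> pmem P y -> peqv P x y -> peqv P y x) /\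
  (forall x y z, pmem P x -> pmem P y -> pmem P z ->
     peqv P x y -> peqv P y z -> peqv P x z) /\
  (forall x x' y y', pmem P x -> pmem P x' -> pmem P y -> pmem P y' ->
     peqv P x x' -> peqv P y y' -> peqv P (pmul P x y) (pmul P x' y')) /\
  (forall x x', pmem P x -> pmem P x' -> peqv P x x' ->
     peqv P (pinv P x) (pinv P x')) /\
  (forall x y z, pmem P x -> pmem P y -> pmem P z ->
     peqv P (pmul P x (pmul P y z)) (pmul P (pmul P x y) z)) /\
  (forall x, pmem P x -> peqv P (pmul P (pone P) x) x) /\
  (forall x, pmem P x -> peqv P (pmul P (pinv P x) x) (pone P)).

Definition is_hom (P Q : PreGrp) (f : pcar P -> pcar Q) : Prop :=
  (forall x, pmem P x -> pmem Q (f x)) /\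
  (forall x y, pmem P x -> pmem P y -> peqv P x y -> peqv Q (f x) (f y)) /\
  (forall x y, pmem P x -> pmem P y ->
     peqv Q (f (pmul P x y)) (pmul Q (f x) (f y))).

Definition normal_sub (P : PreGrp) (N : pcar P -> Prop) : Prop :=
  (forall x, N x -> pmem P x) /\
  N (pone P) /\
  (forall x y, N x -> N y -> N (pmul P x y)) /\
  (forall x, N x -> N (pinv P x)) /\
  (forall x y, N x -> pmem P y -> N (pmul P (pmul P (pinv P y) x) y)) /\
  (forall x y, N x -> pmem P y -> peqv P x y -> N y).

Definition normal_closure (P : PreGrp) (S : pcar P -> Prop) (x : pcar P) : Prop :=
  pmem P x /\
  forall N, normal_sub P N -> (forall y, pmem P y -> S y -> N y) -> N x.

Definition quot (P : PreGrp) (N : pcar P -> Prop) : PreGrp := {|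
  pcar := pcar P;
  pmem := pmem P;
  peqv := fun x y => N (pmul P x (pinv P y));
  pmul := pmul P;
  pinv := pinv P;
  pone := pone P |}.

Definition topprod (G : nat -> Group) (k : nat) : PreGrp := {|
  pcar := infword G;
  pmem := wf_word G k;
  peqv := word_eqv G;
  pmul := word_mul G;
  pinv := word_inv G;
  pone := word_one G |}.

Definition free_prod_class (G : nat -> Group) (w : infword G) : Prop :=
  exists v, wf_word G 0 v /\ finite_word G v /\ word_eqv G w v.

Definition archipelago (G : nat -> Group) : PreGrp :=
  quot (topprod G 0) (normal_closure (topprod G 0) (free_prod_class G)).

Definition is_direct_limit (P : nat -> PreGrp)
    (d : forall k, pcar (P k) -> pcar (P (S k)))
    (D : PreGrp) (psi : forall k, pcar (P k) -> pcar D) : Prop :=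
  (forall k, is_group (P k)) /\
  (forall k, is_hom (P k) (P (S k)) (d k)) /\
  is_group D /\
  (forall k, is_hom (P k) D (psi k)) /\
  (forall k x, pmem (P k) x -> peqv D (psi (S k) (d k x)) (psi k x)) /\
  (forall (H : PreGrp) (f : forall k, pcar (P k) -> pcar H),
     is_group H ->
     (forall k, is_hom (P k) H (f k)) ->
     (forall k x, pmem (P k) x -> peqv H (f (S k) (d k x)) (f k x)) ->
     exists u : pcar D -> pcar H,
       is_hom D H u /\
       (forall k x, pmem (P k) x -> peqv H (u (psi k x)) (f k x)) /\
       (forall u' : pcar D -> pcar H,
          is_hom D H u' ->
          (forall k x, pmem (P k) x -> peqv H (u' (psi k x)) (f k x)) ->
          forall y, pmem D y -> peqv H (u' y) (u y))).

From Stdlib Require Import List Sorting.Sorted Relations.Relation_Operators Lia PeanoNat.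
From Stdlib Require Import Classical ClassicalEpsilon ProofIrrelevance.
Import ListNotations.

(* Word equivalence is tested on finite restrictions, so every group identity
   between infinite words reduces to a free-product identity between their
   restrictions.  Deleting the letters of G_k is a homomorphism and does not
   change the class of a word in the archipelago group: a word has finitely
   many G_k-letters, and removing one letter p from A p B changes the word by
   A p^-1 A^-1, a conjugate of a finite word.  A compatible family (f_k)
   factors through f_0: a finite word with letters from G_0, ..., G_M is
   erased by the first M+1 bonding maps, so f_0 kills the free product and
   hence its normal closure; and f_k agrees with f_0 on the k-th product,
   whose words are fixed by the bonding maps below k. *)

Lemma sig_ext (A : Type) (P : A -> Prop) (a b : {x | P x}) :
  proj1_sig a = proj1_sig b -> a = b.
Proof. apply eq_sig_hprop. intros. apply proof_irrelevance. Qed.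

Section GroupFacts.
Variable H : Group.
Local Notation "a * b" := (gmul H a b).
Local Notation "a ^-1" := (ginv H a) (at level 3).
Local Notation one := (gone H).

Lemma gmul_inv_r (a : H) : a * a^-1 = one.
Proof.
  rewrite <- (gmul1 H (a * a^-1)), <- (gmulV H (a^-1)) at 1.
  rewrite <- gmulA, (gmulA H (a^-1) a (a^-1)), gmulV, gmul1.
  apply gmulV.
Qed.

Lemma gmul_one_r (a : H) : a * one = a.
Proof. rewrite <- (gmulV H a), gmulA, gmul_inv_r. apply gmul1. Qed.

Lemma ginv_involutive (a : H) : (a^-1)^-1 = a.
Proof.
  rewrite <- (gmul_one_r ((a^-1)^-1)), <- (gmulV H a), gmulA, gmulV.
  apply gmul1.
Qed.

Lemma ginv_mul (a b : H) : (a * b)^-1 = b^-1 * a^-1.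
Proof.
  assert (E : (a * b) * (b^-1 * a^-1) = one).
  { rewrite <- gmulA, (gmulA H b), gmul_inv_r, gmul1. apply gmul_inv_r. }
  rewrite <- (gmul_one_r ((a * b)^-1)), <- E, gmulA, gmulV. apply gmul1.
Qed.

Lemma ginv_one : one^-1 = one.
Proof. rewrite <- (gmul_one_r (one^-1)). apply gmulV. Qed.

Lemma ginv_eq_one (a : H) : a^-1 = one -> a = one.
Proof. intro E. rewrite <- (ginv_involutive a), E. apply ginv_one. Qed.
End GroupFacts.

Section StronglySortedFacts.
Context {T : Type}.
Implicit Type R : T -> T -> Prop.

Lemma StronglySorted_app R l1 l2 :
  StronglySorted R l1 -> StronglySorted R l2 ->
  (forall x y, In x l1 -> In y l2 -> R x y) -> StronglySorted R (l1 ++ l2).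
Proof.
  induction l1 as [|a l1 IH]; simpl; intros S1 S2 R12; auto.
  apply StronglySorted_inv in S1 as [S1 Fa]. constructor.
  - apply IH; auto.
  - apply Forall_app. split; auto.
    apply Forall_forall. intros y Hy. apply R12; simpl; auto.
Qed.

Lemma StronglySorted_rev R l :
  StronglySorted R l -> StronglySorted (fun a b => R b a) (rev l).
Proof.
  induction l as [|a l IH]; simpl; intros S. constructor.
  apply StronglySorted_inv in S as [S Fa]. rewrite Forall_forall in Fa.
  apply StronglySorted_app; auto.
  - repeat constructor.
  - intros x y Hx [<-|[]]. rewrite <- in_rev in Hx. auto.
Qed.

Lemma StronglySorted_map R U (R' : U -> U -> Prop) (f : T -> U) l :
  (forall a b, R a b -> R' (f a) (f b)) ->
  StronglySorted R l -> StronglySorted R' (map f l).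
Proof.
  intros Hf. induction l as [|a l IH]; simpl; intros S. constructor.
  apply StronglySorted_inv in S as [S Fa]. constructor; auto.
  apply Forall_map. eapply Forall_impl; [|exact Fa]. auto.
Qed.

Section LinearOrder.
Context {R : T -> T -> Prop}.
Hypotheses (R_irrefl : forall x, ~ R x x)
  (R_trans : forall x y z, R x y -> R y z -> R x z)
  (R_total : forall x y, R x y \/ x = y \/ R y x).

Lemma StronglySorted_insert x l : StronglySorted R l ->
  exists l', StronglySorted R l' /\ forall z, In z l' <-> z = x \/ In z l.
Proof.
  induction l as [|b l IH]; intros S.
  - exists [x]. split; [repeat constructor|]. simpl; intuition.
  - apply StronglySorted_inv in S as [S Fb]. rewrite Forall_forall in Fb.
    destruct (R_total x b) as [Hxb|[<-|Hbx]].
    + exists (x :: b :: l). split; [|simpl; intuition].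
      constructor; [constructor; auto; apply Forall_forall; auto|].
      apply Forall_forall. intros y [<-|Hy]; eauto.
    + exists (x :: l). split; [constructor; auto; apply Forall_forall; auto|].
      simpl; intuition.
    + destruct (IH S) as [l' [S' E']]. exists (b :: l'). split.
      * constructor; auto. apply Forall_forall. intros y Hy.
        apply E' in Hy as [->|Hy]; auto.
      * intro z. simpl. rewrite E'. intuition.
Qed.

Lemma StronglySorted_same_elements l1 l2 :
  StronglySorted R l1 -> StronglySorted R l2 ->
  (forall x, In x l1 <-> In x l2) -> l1 = l2.
Proof.
  revert l2. induction l1 as [|a l1 IH]; intros [|b l2] S1 S2 E; auto.
  - exfalso. apply (proj2 (E b)). left; auto.
  - exfalso. apply (proj1 (E a)). left; auto.
  - apply StronglySorted_inv in S1 as [S1 Fa], S2 as [S2 Fb].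
    rewrite Forall_forall in Fa, Fb.
    assert (a = b) as <-.
    { destruct (proj1 (E a) (or_introl eq_refl)) as [->|Ha]; auto.
      destruct (proj2 (E b) (or_introl eq_refl)) as [->|Hb]; auto.
      exfalso. apply (R_irrefl a). eauto. }
    f_equal. apply IH; auto. intro x. split; intro Hx.
    + destruct (proj1 (E x) (or_intror Hx)) as [<-|]; auto.
      exfalso. apply (R_irrefl a). auto.
    + destruct (proj2 (E x) (or_intror Hx)) as [<-|]; auto.
      exfalso. apply (R_irrefl a). auto.
Qed.
End LinearOrder.
End StronglySortedFacts.

Section PreGroupFacts.
Variable P : PreGrp.
Hypothesis HP : is_group P.
Local Notation mem := (pmem P).
Local Notation e := (peqv P).
Local Notation "a * b" := (pmul P a b).
Local Notation "a ^-1" := (pinv P a) (at level 3).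
Local Notation one := (pone P).

Lemma pmem_one : mem one. Proof. apply HP. Qed.
Lemma pmem_mul a b : mem a -> mem b -> mem (a * b). Proof. apply HP. Qed.
Lemma pmem_inv a : mem a -> mem (a^-1). Proof. apply HP. Qed.
Lemma peqv_refl a : mem a -> e a a. Proof. apply HP. Qed.
Lemma peqv_sym a b : mem a -> mem b -> e a b -> e b a. Proof. apply HP. Qed.
Lemma peqv_trans a b c : mem a -> mem b -> mem c -> e a b -> e b c -> e a c.
Proof. apply HP. Qed.
Lemma peqv_mul a a' b b' : mem a -> mem a' -> mem b -> mem b' ->
  e a a' -> e b b' -> e (a * b) (a' * b').
Proof. apply HP. Qed.
Lemma pmulA a b c : mem a -> mem b -> mem c -> e (a * (b * c)) ((a * b) * c).
Proof. apply HP. Qed.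
Lemma pmul1 a : mem a -> e (one * a) a. Proof. apply HP. Qed.
Lemma pmulV a : mem a -> e (a^-1 * a) one. Proof. apply HP. Qed.

Local Hint Resolve pmem_one pmem_mul pmem_inv peqv_refl : core.
Local Ltac via b := apply (peqv_trans _ b); auto.
Local Ltac sym := apply peqv_sym; auto.

Lemma pmul_idem_one a : mem a -> e (a * a) a -> e a one.
Proof.
  intros Ha E.
  via (one * a). sym. apply pmul1; auto.
  via ((a^-1 * a) * a). apply peqv_mul; auto. sym. apply pmulV; auto.
  via (a^-1 * (a * a)). sym. apply pmulA; auto.
  via (a^-1 * a). apply peqv_mul; auto. apply pmulV; auto.
Qed.

Lemma pmul_inv_r a : mem a -> e (a * a^-1) one.
Proof.
  intros Ha. apply pmul_idem_one; auto.
  via (a * (a^-1 * (a * a^-1))). sym. apply pmulA; auto.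
  apply peqv_mul; auto.
  via ((a^-1 * a) * a^-1). apply pmulA; auto.
  via (one * a^-1). apply peqv_mul; auto. apply pmulV; auto. apply pmul1; auto.
Qed.

Lemma pmul_one_r a : mem a -> e (a * one) a.
Proof.
  intros Ha.
  via (a * (a^-1 * a)). apply peqv_mul; auto. sym. apply pmulV; auto.
  via ((a * a^-1) * a). apply pmulA; auto.
  via (one * a). apply peqv_mul; auto. apply pmul_inv_r; auto. apply pmul1; auto.
Qed.
End PreGroupFacts.

Global Hint Resolve pmem_one pmem_mul pmem_inv peqv_refl : pgroup.

Section HomFacts.
Variables (P H : PreGrp) (f : pcar P -> pcar H).
Hypotheses (HP : is_group P) (HH : is_group H) (Hf : is_hom P H f).
Local Notation e := (peqv H).

Lemma hom_mem x : pmem P x -> pmem H (f x). Proof. apply Hf. Qed.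
Lemma hom_eqv x y : pmem P x -> pmem P y -> peqv P x y -> e (f x) (f y).
Proof. apply Hf. Qed.
Lemma hom_mul x y : pmem P x -> pmem P y -> e (f (pmul P x y)) (pmul H (f x) (f y)).
Proof. apply Hf. Qed.

Local Hint Resolve hom_mem : pgroup.
Local Ltac via b := apply (peqv_trans _ HH _ b); auto with pgroup.
Local Ltac sym := apply (peqv_sym _ HH); auto with pgroup.

Lemma hom_one : e (f (pone P)) (pone H).
Proof.
  apply pmul_idem_one; auto with pgroup.
  via (f (pmul P (pone P) (pone P))). sym. apply hom_mul; auto with pgroup.
  apply hom_eqv; auto with pgroup. apply pmul1; auto with pgroup.
Qed.

Lemma hom_mul_one x y : pmem P x -> pmem P y -> e (f x) (pone H) ->
  e (f (pmul P x y)) (f y).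
Proof.
  intros Hx Hy Ex.
  via (pmul H (f x) (f y)). apply hom_mul; auto.
  via (pmul H (pone H) (f y)). apply peqv_mul; auto with pgroup.
  apply pmul1; auto with pgroup.
Qed.

Lemma hom_inv_mul x : pmem P x -> e (f (pmul P (pinv P x) x)) (pone H).
Proof.
  intros Hx. via (f (pone P)). apply hom_eqv; auto with pgroup.
  apply pmulV; auto. apply hom_one.
Qed.

Lemma hom_kernel_normal : normal_sub P (fun x => pmem P x /\ e (f x) (pone H)).
Proof.
  split; [|split; [|split; [|split; [|split]]]].
  - tauto.
  - split; auto with pgroup. apply hom_one.
  - intros x y [Hx Ex] [Hy Ey]. split; auto with pgroup.
    via (f y). apply hom_mul_one; auto.
  - intros x [Hx Ex]. split; auto with pgroup.
    via (pmul H (f (pinv P x)) (pone H)). sym. apply pmul_one_r; auto with pgroup.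
    via (pmul H (f (pinv P x)) (f x)). apply peqv_mul; auto with pgroup. sym.
    via (f (pmul P (pinv P x) x)). sym. apply hom_mul; auto with pgroup.
    apply hom_inv_mul; auto.
  - intros x y [Hx Ex] Hy. split; auto with pgroup.
    via (pmul H (f (pmul P (pinv P y) x)) (f y)). apply hom_mul; auto with pgroup.
    via (pmul H (f (pinv P y)) (f y)).
    { apply peqv_mul; auto with pgroup.
      via (pmul H (f (pinv P y)) (f x)). apply hom_mul; auto with pgroup.
      via (pmul H (f (pinv P y)) (pone H)). apply peqv_mul; auto with pgroup.
      apply pmul_one_r; auto with pgroup. }
    via (f (pmul P (pinv P y) y)). sym. apply hom_mul; auto with pgroup.
    apply hom_inv_mul; auto.
  - intros x y [Hx Ex] Hy E. split; auto with pgroup.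
    via (f x). sym. apply hom_eqv; auto with pgroup.
Qed.

Lemma hom_eqv_of_kernel x y : pmem P x -> pmem P y ->
  e (f (pmul P x (pinv P y))) (pone H) -> e (f x) (f y).
Proof.
  intros Hx Hy E.
  via (f (pmul P (pmul P x (pinv P y)) y)).
  { apply hom_eqv; auto with pgroup. apply (peqv_sym _ HP); auto with pgroup.
    apply (peqv_trans _ HP _ (pmul P x (pmul P (pinv P y) y))); auto with pgroup.
    { apply (peqv_sym _ HP); auto with pgroup. apply pmulA; auto with pgroup. }
    apply (peqv_trans _ HP _ (pmul P x (pone P))); auto with pgroup.
    { apply peqv_mul; auto with pgroup. apply pmulV; auto. }
    apply pmul_one_r; auto. }
  apply hom_mul_one; auto with pgroup.
Qed.
End HomFacts.

Section Words.
Variable G : nat -> Group.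
Local Notation letter := (letter G).
Local Notation lidx := (lidx G).
Local Notation fp_step := (fp_step G).
Local Notation fp_eq := (fp_eq G).
Local Notation W := (infword G).
Local Notation ipos := (ipos G).
Local Notation ilt := (ilt G).
Local Notation iw := (iw G).
Local Notation wf := (wf_word G).
Local Notation restr := (restr G).
Local Notation eqv := (word_eqv G).
Local Notation mul := (word_mul G).
Local Notation inv := (word_inv G).
Local Notation one := (word_one G).
Local Notation delete := (delete G).

Definition inv_letter (a : letter) : letter := existT _ (projT1 a) (ginv _ (projT2 a)).
Definition inv_list (s : list letter) : list letter := rev (map inv_letter s).

Lemma inv_letter_involutive a : inv_letter (inv_letter a) = a.
Proof. destruct a as [n x]. unfold inv_letter; simpl. rewrite ginv_involutive. reflexivity. Qed.

Lemma inv_list_app s t : inv_list (s ++ t) = inv_list t ++ inv_list s.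
Proof. unfold inv_list. rewrite map_app, rev_app_distr. reflexivity. Qed.

Lemma inv_list_involutive s : inv_list (inv_list s) = s.
Proof.
  unfold inv_list. rewrite map_rev, rev_involutive, map_map.
  rewrite <- (map_id s) at 2. apply map_ext. apply inv_letter_involutive.
Qed.

Lemma fp_eq_refl s : fp_eq s s. Proof. apply rst_refl. Qed.
Lemma fp_eq_sym s t : fp_eq s t -> fp_eq t s. Proof. apply rst_sym. Qed.
Lemma fp_eq_trans s t u : fp_eq s t -> fp_eq t u -> fp_eq s u. Proof. apply rst_trans. Qed.

Lemma fp_eq_of_steps (F : list letter -> list letter) :
  (forall s t, fp_step s t -> fp_eq (F s) (F t)) ->
  forall s t, fp_eq s t -> fp_eq (F s) (F t).
Proof.
  intros HF s t E. induction E.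
  - auto.
  - apply fp_eq_refl.
  - apply fp_eq_sym; auto.
  - eapply fp_eq_trans; eauto.
Qed.

Lemma fp_eq_app_l u s t : fp_eq s t -> fp_eq (u ++ s) (u ++ t).
Proof.
  apply (fp_eq_of_steps (app u)). intros s' t' [v w n a b|v w n]; apply rst_step;
    rewrite !app_assoc; constructor.
Qed.

Lemma fp_eq_app_r v s t : fp_eq s t -> fp_eq (s ++ v) (t ++ v).
Proof.
  apply (fp_eq_of_steps (fun s => s ++ v)). intros s' t' [u w n a b|u w n]; apply rst_step;
    rewrite <- !app_assoc; constructor.
Qed.

Lemma fp_eq_app s s' t t' : fp_eq s s' -> fp_eq t t' -> fp_eq (s ++ t) (s' ++ t').
Proof. intros E1 E2. eapply fp_eq_trans; [apply fp_eq_app_r, E1|apply fp_eq_app_l, E2]. Qed.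

Lemma fp_eq_mul_inv_r s : fp_eq (s ++ inv_list s) [].
Proof.
  induction s as [|[n x] s IH]; simpl. apply fp_eq_refl.
  change (inv_list (existT _ n x :: s)) with (inv_list s ++ [existT _ n (ginv _ x)]).
  rewrite app_assoc.
  apply fp_eq_trans with [existT _ n x; existT _ n (ginv _ x)].
  { apply (fp_eq_app_l [_]), (fp_eq_app_r [_] _ []), IH. }
  eapply fp_eq_trans; [apply rst_step, (fp_merge G [] [])|]. simpl.
  rewrite gmul_inv_r. apply rst_step, (fp_drop G [] [] n).
Qed.

Lemma fp_eq_mul_inv_l s : fp_eq (inv_list s ++ s) [].
Proof. rewrite <- (inv_list_involutive s) at 2. apply fp_eq_mul_inv_r. Qed.

Lemma fp_eq_cancel_l s v : fp_eq (inv_list s ++ (s ++ v)) v.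
Proof. rewrite app_assoc. apply (fp_eq_app_r v _ []), fp_eq_mul_inv_l. Qed.

Lemma fp_eq_cancel_tail u s : fp_eq (u ++ (inv_list s ++ s)) u.
Proof. rewrite <- (app_nil_r u) at 2. apply fp_eq_app_l, fp_eq_mul_inv_l. Qed.

Lemma fp_eq_inv_list s t : fp_eq s t -> fp_eq (inv_list s) (inv_list t).
Proof.
  apply fp_eq_of_steps. intros s' t' [u v n a b|u v n]; apply rst_step;
    unfold inv_list; rewrite !map_app, !rev_app_distr; simpl;
    rewrite <- !app_assoc; simpl; unfold inv_letter; simpl.
  - rewrite ginv_mul. constructor.
  - rewrite ginv_one. constructor.
Qed.

Definition drop_index (k : nat) (s : list letter) : list letter :=
  filter (fun a => negb (Nat.eqb (lidx a) k)) s.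

Lemma fp_eq_drop_index k s t : fp_eq s t -> fp_eq (drop_index k s) (drop_index k t).
Proof.
  apply fp_eq_of_steps. intros s' t' [u v n a b|u v n];
    unfold drop_index; rewrite !filter_app; simpl; unfold lidx; simpl;
    destruct (Nat.eqb n k); simpl; try apply fp_eq_refl; apply rst_step; constructor.
Qed.

Section WellFormed.
Variables (k : nat) (w : W).
Hypothesis Hw : wf k w.

Lemma wf_irrefl x : ~ ilt w x x. Proof. apply Hw. Qed.
Lemma wf_trans x y z : ilt w x y -> ilt w y z -> ilt w x z. Proof. apply Hw. Qed.
Lemma wf_total x y : ilt w x y \/ x = y \/ ilt w y x. Proof. apply Hw. Qed.
Lemma wf_countable : exists f : ipos w -> nat, forall x y, f x = f y -> x = y.
Proof. apply Hw. Qed.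
Lemma wf_finite_index n : exists s : list (ipos w), forall l, lidx (iw w l) = n -> In l s.
Proof. apply Hw. Qed.
Lemma wf_nontrivial l : projT2 (iw w l) <> gone (G (projT1 (iw w l))).
Proof. apply Hw. Qed.
Lemma wf_index_ge l : k <= lidx (iw w l).
Proof. apply Hw. Qed.

Lemma wf_finite_index_le m : exists s : list (ipos w), forall l, lidx (iw w l) <= m -> In l s.
Proof.
  induction m as [|m [s1 H1]].
  - destruct (wf_finite_index 0) as [s Hs]. exists s. intros l Hl. apply Hs. lia.
  - destruct (wf_finite_index (S m)) as [s2 H2]. exists (s1 ++ s2).
    intros l Hl. apply in_or_app.
    destruct (Nat.eq_dec (lidx (iw w l)) (S m)); [right; auto|left; apply H1; lia].
Qed.

Lemma sorted_selection (P : ipos w -> Prop) (L : list (ipos w)) :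
  exists ls, StronglySorted (ilt w) ls /\ forall l, In l ls <-> In l L /\ P l.
Proof.
  induction L as [|a L [ls [S E]]].
  - exists []. split; [constructor|]. simpl; tauto.
  - destruct (classic (P a)) as [Pa|nPa].
    + destruct (StronglySorted_insert wf_trans wf_total a ls S) as [ls' [S' E']].
      exists ls'. split; auto. intro l. rewrite E', E. simpl.
      split; [intros [->|[]]|intros [[->|]]]; auto.
    + exists ls. split; auto. intro l. rewrite E. simpl.
      split; [intros []|intros [[->|]]]; tauto.
Qed.

Lemma restr_exists m : exists s, restr w m s.
Proof.
  destruct (wf_finite_index_le m) as [L HL].
  destruct (sorted_selection (fun l => lidx (iw w l) <= m) L) as [ls [S E]].
  exists (map (iw w) ls), ls. split; [|split]; auto.
  intro l. rewrite E. intuition.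
Qed.

Lemma restr_unique m s t : restr w m s -> restr w m t -> s = t.
Proof.
  intros [l1 [S1 [E1 ->]]] [l2 [S2 [E2 ->]]]. f_equal.
  apply (StronglySorted_same_elements wf_irrefl wf_trans); auto.
  intro x. rewrite E1, E2. reflexivity.
Qed.
End WellFormed.

Lemma restr_one m : restr one m [].
Proof. exists []. split; [constructor|]. split; auto. intros []. Qed.

Lemma restr_mul x y m s t : restr x m s -> restr y m t -> restr (mul x y) m (s ++ t).
Proof.
  intros [l1 [S1 [E1 ->]]] [l2 [S2 [E2 ->]]].
  exists (map inl l1 ++ map inr l2). split; [|split].
  - apply StronglySorted_app.
    + apply (StronglySorted_map (ilt x)); auto.
    + apply (StronglySorted_map (ilt y)); auto.
    + intros a b Ha Hb. apply in_map_iff in Ha as [a' [<- _]].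
      apply in_map_iff in Hb as [b' [<- _]]. exact I.
  - intros [a|b]; simpl; rewrite in_app_iff, !in_map_iff.
    + rewrite <- E1. split.
      * intros [[a' [E Ha']]|[b' [E _]]]; [injection E as ->; auto|discriminate].
      * intro Ha. left. eauto.
    + rewrite <- E2. split.
      * intros [[a' [E _]]|[b' [E Hb']]]; [discriminate|injection E as ->; auto].
      * intro Hb. right. eauto.
  - rewrite map_app, !map_map. reflexivity.
Qed.

Lemma restr_inv x m s : restr x m s -> restr (inv x) m (inv_list s).
Proof.
  intros [ls [S [E ->]]]. exists (rev ls). split; [|split].
  - apply StronglySorted_rev; auto.
  - intro l. rewrite <- in_rev. apply E.
  - unfold inv_list. rewrite map_map, map_rev. reflexivity.
Qed.

Lemma wf_one k : wf k one.
Proof.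
  repeat split; simpl; try (intros []; fail).
  - exists (fun _ => 0). intros [].
  - intro n. exists []. intros [].
Qed.

Lemma wf_mul k x y : wf k x -> wf k y -> wf k (mul x y).
Proof.
  intros Hx Hy. repeat split; simpl.
  - intros [a|a]; [apply (wf_irrefl _ _ Hx)|apply (wf_irrefl _ _ Hy)].
  - intros [a|a] [b|b] [c|c]; simpl; try tauto;
      [apply (wf_trans _ _ Hx)|apply (wf_trans _ _ Hy)].
  - intros [a|a] [b|b]; simpl; auto.
    + destruct (wf_total _ _ Hx a b) as [|[->|]]; auto.
    + destruct (wf_total _ _ Hy a b) as [|[->|]]; auto.
  - destruct (wf_countable _ _ Hx) as [f Hf], (wf_countable _ _ Hy) as [g Hg].
    exists (fun z => match z with inl a => 2 * f a | inr b => 2 * g b + 1 end).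
    intros [a|a] [b|b] E; try lia; f_equal; [apply Hf|apply Hg]; lia.
  - intro n. destruct (wf_finite_index _ _ Hx n) as [s Hs], (wf_finite_index _ _ Hy n) as [t Ht].
    exists (map inl s ++ map inr t).
    intros [a|a] Ha; apply in_or_app; [left|right]; apply in_map; auto.
  - intros [a|a]; [apply (wf_nontrivial _ _ Hx)|apply (wf_nontrivial _ _ Hy)].
  - intros [a|a]; [apply (wf_index_ge _ _ Hx)|apply (wf_index_ge _ _ Hy)].
Qed.

Lemma wf_inv k x : wf k x -> wf k (inv x).
Proof.
  intros Hx. repeat split; simpl.
  - apply (wf_irrefl _ _ Hx).
  - intros a b c H1 H2. apply (wf_trans _ _ Hx _ b); auto.
  - intros a b. destruct (wf_total _ _ Hx a b) as [|[->|]]; auto.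
  - apply (wf_countable _ _ Hx).
  - apply (wf_finite_index _ _ Hx).
  - intros l E. apply (wf_nontrivial _ _ Hx l), ginv_eq_one, E.
  - apply (wf_index_ge _ _ Hx).
Qed.

Lemma wf_weaken k k' x : k <= k' -> wf k' x -> wf k x.
Proof.
  intros Hk Hx. repeat split; try apply Hx.
  intro l. pose proof (wf_index_ge _ _ Hx l). lia.
Qed.

Lemma eqv_of_restr k w v : wf k w -> wf k v ->
  (forall m, exists s t, restr w m s /\ restr v m t /\ fp_eq s t) -> eqv w v.
Proof.
  intros Hw Hv H m s t Hs Ht. destruct (H m) as [s' [t' [H1 [H2 E]]]].
  rewrite (restr_unique _ _ Hw _ _ _ Hs H1), (restr_unique _ _ Hv _ _ _ Ht H2). exact E.
Qed.

Lemma eqv_refl k w : wf k w -> eqv w w.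
Proof. intros Hw m s t Hs Ht. rewrite (restr_unique _ _ Hw _ _ _ Hs Ht). apply fp_eq_refl. Qed.

Lemma eqv_sym w v : eqv w v -> eqv v w.
Proof. intros E m s t Hs Ht. apply fp_eq_sym. eapply E; eauto. Qed.

Lemma eqv_trans k w v u : wf k v -> eqv w v -> eqv v u -> eqv w u.
Proof.
  intros Hv E1 E2 m s t Hs Ht. destruct (restr_exists _ _ Hv m) as [r Hr].
  eapply fp_eq_trans; eauto.
Qed.

Ltac wf_solve :=
  repeat first [assumption | apply wf_mul | apply wf_inv | apply wf_one].

(* Leaves only the [fp_eq] identity between the restrictions of both sides. *)
Ltac eqv_by_restr k :=
  apply (eqv_of_restr k); [wf_solve ..|];
  let m := fresh "m" in intro m;
  repeat match goal with
  | H : wf _ ?x |- _ =>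
      lazymatch goal with
      | _ : restr x m _ |- _ => fail
      | _ => let s := fresh "s" in let Hs := fresh "Hs" in
             destruct (restr_exists _ _ H m) as [s Hs]
      end
  end;
  eexists; eexists; split; [eauto 20 using restr_mul, restr_inv, restr_one|];
  split; [eauto 20 using restr_mul, restr_inv, restr_one|].

Lemma eqv_mul k x x' y y' : wf k x -> wf k x' -> wf k y -> wf k y' ->
  eqv x x' -> eqv y y' -> eqv (mul x y) (mul x' y').
Proof. intros Hx Hx' Hy Hy' E1 E2. eqv_by_restr k. apply fp_eq_app; eauto. Qed.

Lemma eqv_inv k x x' : wf k x -> wf k x' -> eqv x x' -> eqv (inv x) (inv x').
Proof. intros Hx Hx' E. eqv_by_restr k. apply fp_eq_inv_list; eauto. Qed.

Lemma eqv_mulA k x y z : wf k x -> wf k y -> wf k z ->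
  eqv (mul x (mul y z)) (mul (mul x y) z).
Proof. intros Hx Hy Hz. eqv_by_restr k. rewrite app_assoc. apply fp_eq_refl. Qed.

Lemma eqv_mul1 k x : wf k x -> eqv (mul one x) x.
Proof. intros Hx. eqv_by_restr k. apply fp_eq_refl. Qed.

Lemma eqv_mulV k x : wf k x -> eqv (mul (inv x) x) one.
Proof. intros Hx. eqv_by_restr k. apply fp_eq_mul_inv_l. Qed.

Lemma eqv_mul_inv_r k x : wf k x -> eqv (mul x (inv x)) one.
Proof. intros Hx. eqv_by_restr k. apply fp_eq_mul_inv_r. Qed.

Lemma topprod_is_group k : is_group (topprod G k).
Proof.
  unfold is_group; simpl.
  split; [apply wf_one|].
  split; [intros; apply wf_mul; auto|].
  split; [intros; apply wf_inv; auto|].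
  split; [intros; eapply eqv_refl; eauto|].
  split; [intros; apply eqv_sym; auto|].
  split; [intros x y z Hx Hy Hz E1 E2; exact (eqv_trans k x y z Hy E1 E2)|].
  split; [intros; eapply eqv_mul; eauto|].
  split; [intros; eapply eqv_inv; eauto|].
  split; [intros; eapply eqv_mulA; eauto|].
  split; [intros; eapply eqv_mul1; eauto|].
  intros; eapply eqv_mulV; eauto.
Qed.

Definition sub (w : W) (P : ipos w -> Prop) : W :=
  Build_infword G {l | P l} (fun a b => ilt w (proj1_sig a) (proj1_sig b))
    (fun a => iw w (proj1_sig a)).

Definition single (c : letter) : W := Build_infword G unit (fun _ _ => False) (fun _ => c).

Lemma wf_sub k w P : wf k w -> wf k (sub w P).
Proof.
  intros Hw. repeat split; simpl.
  - intro a. apply (wf_irrefl _ _ Hw).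
  - intros a b c. apply (wf_trans _ _ Hw).
  - intros a b. destruct (wf_total _ _ Hw (proj1_sig a) (proj1_sig b)) as [|[E|]]; auto.
    right; left. apply sig_ext, E.
  - destruct (wf_countable _ _ Hw) as [f Hf]. exists (fun a => f (proj1_sig a)).
    intros a b E. apply sig_ext. auto.
  - intro n. destruct (wf_finite_index _ _ Hw n) as [s Hs].
    exists (flat_map (fun l => match excluded_middle_informative (P l) with
                               | left h => [exist _ l h] | right _ => [] end) s).
    intros [l h] Hl. apply in_flat_map. exists l. split; [apply Hs; auto|].
    destruct (excluded_middle_informative (P l)) as [h'|]; [|contradiction].
    left. apply sig_ext. reflexivity.
  - intro a. apply (wf_nontrivial _ _ Hw).
  - intro a. apply (wf_index_ge _ _ Hw).
Qed.

Lemma wf_single k c : projT2 c <> gone (G (projT1 c)) -> k <= lidx c -> wf k (single c).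
Proof.
  intros H1 H2. repeat split; simpl; auto.
  - intros [] []. auto.
  - exists (fun _ => 0). intros [] [] _. auto.
  - intro n. exists [tt]. intros [] _. simpl. auto.
Qed.

Lemma wf_delete k w : wf k w -> wf (S k) (delete k w).
Proof.
  intros Hw. pose proof (wf_sub k w (fun l => lidx (iw w l) <> k) Hw) as Hs.
  repeat split; try apply Hs.
  intros [l h]. simpl in *. pose proof (wf_index_ge _ _ Hw l). lia.
Qed.

Section OrderIsomorphism.
Variables (v w : W) (f : ipos v -> ipos w).
Hypotheses (f_surj : forall b, exists a, f a = b)
  (f_mono : forall a b, ilt v a b -> ilt w (f a) (f b))
  (f_letter : forall a, iw w (f a) = iw v a).

Lemma restr_iso m s : restr v m s -> restr w m s.
Proof.
  intros [ls [S [E ->]]]. exists (map f ls). split; [|split].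
  - apply (StronglySorted_map (ilt v)); auto.
  - intro l. split.
    + intro Hl. apply in_map_iff in Hl as [a [<- Ha]]. rewrite f_letter. apply E, Ha.
    + intro Hl. destruct (f_surj l) as [a <-]. apply in_map, E.
      rewrite <- f_letter. exact Hl.
  - rewrite map_map. apply map_ext. intro. rewrite f_letter. reflexivity.
Qed.

Lemma eqv_iso k : wf k w -> eqv v w.
Proof.
  intros Hw m s t Hs Ht. apply restr_iso in Hs.
  rewrite (restr_unique _ _ Hw _ _ _ Hs Ht). apply fp_eq_refl.
Qed.
End OrderIsomorphism.

Lemma eqv_sub_all k w (P : ipos w -> Prop) : wf k w -> (forall l, P l) -> eqv (sub w P) w.
Proof.
  intros Hw HP. apply (eqv_iso (sub w P) w (@proj1_sig _ _)) with k; auto.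
  intro l. exists (exist _ l (HP l)). reflexivity.
Qed.

Lemma eqv_sub_ext k w (P Q : ipos w -> Prop) : wf k w -> (forall l, P l <-> Q l) ->
  eqv (sub w P) (sub w Q).
Proof.
  intros Hw HPQ.
  apply (eqv_iso (sub w P) (sub w Q)
    (fun a => exist _ (proj1_sig a) (proj1 (HPQ _) (proj2_sig a)))) with k; auto using wf_sub.
  intros [l q]. exists (exist _ l (proj2 (HPQ _) q)). apply sig_ext. reflexivity.
Qed.

Lemma eqv_sub_sub k w (P : ipos w -> Prop) (Q : ipos (sub w P) -> Prop) (R : ipos w -> Prop)
  (HRP : forall l, R l -> P l) (HQR : forall l (h : P l), Q (exist _ l h) <-> R l) :
  wf k w -> eqv (sub (sub w P) Q) (sub w R).
Proof.
  intros Hw.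
  apply (eqv_iso (sub (sub w P) Q) (sub w R)
    (fun z => match z with exist _ (exist _ l h) q => exist R l (proj1 (HQR l h) q) end))
    with k; auto using wf_sub.
  - intros [l r]. exists (exist Q (exist P l (HRP l r)) (proj2 (HQR l (HRP l r)) r)).
    apply sig_ext. reflexivity.
  - intros [[l h] q] [[l' h'] q']. simpl. auto.
  - intros [[l h] q]. reflexivity.
Qed.

Section SplitAtLetter.
Variables (k : nat) (y : W) (p : ipos y).
Hypothesis Hy : wf k y.
Let before := sub y (fun l => ilt y l p).
Let after := sub y (fun l => ilt y p l).

Lemma eqv_split_at : eqv (mul before (mul (single (iw y p)) after)) y.
Proof.
  apply (eqv_iso _ y
    (fun z : ipos (mul before (mul (single (iw y p)) after)) => match z with
              | inl a => proj1_sig a | inr (inl _) => p | inr (inr b) => proj1_sig b end))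
    with k; auto.
  - intro l. destruct (wf_total _ _ Hy l p) as [h|[->|h]].
    + exists (inl (exist _ l h)). reflexivity.
    + exists (inr (inl tt)). reflexivity.
    + exists (inr (inr (exist _ l h))). reflexivity.
  - intros [[a ha]|[[]|[a ha]]] [[b hb]|[[]|[b hb]]]; simpl; try tauto;
      intros; eauto using wf_trans.
  - intros [[a ha]|[[]|[a ha]]]; reflexivity.
Qed.

Lemma eqv_remove_split : eqv (mul before after) (sub y (fun l => l <> p)).
Proof.
  assert (ilt_neq : forall l, ilt y l p \/ ilt y p l -> l <> p).
  { intros l [H|H] ->; exact (wf_irrefl _ _ Hy p H). }
  apply (eqv_iso _ (sub y (fun l => l <> p))
    (fun z : ipos (mul before after) => match z with
              | inl a => exist _ (proj1_sig a) (ilt_neq _ (or_introl (proj2_sig a)))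
              | inr b => exist _ (proj1_sig b) (ilt_neq _ (or_intror (proj2_sig b))) end))
    with k; auto using wf_sub.
  - intros [l hl]. destruct (wf_total _ _ Hy l p) as [h|[E|h]]; [|contradiction|].
    + exists (inl (exist _ l h)). apply sig_ext. reflexivity.
    + exists (inr (exist _ l h)). apply sig_ext. reflexivity.
  - intros [[a ha]|[a ha]] [[b hb]|[b hb]]; simpl; try tauto;
      intros; eauto using wf_trans.
  - intros [[a ha]|[a ha]]; reflexivity.
Qed.
End SplitAtLetter.

Local Notation N := (normal_closure (topprod G 0) (free_prod_class G)).
Local Notation aeqv x y := (N (mul x (inv y))).

Lemma nclosure_of_free x : wf 0 x -> free_prod_class G x -> N x.
Proof. intros Hx Fx. split; auto. Qed.

Lemma nclosure_one : N one.
Proof. split; [apply wf_one|]. intros M (_ & M1 & _) _. exact M1. Qed.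

Lemma nclosure_mul x y : N x -> N y -> N (mul x y).
Proof.
  intros [Hx Fx] [Hy Fy]. split; [apply wf_mul; auto|].
  intros M HM HS. pose proof HM as (_ & _ & Mmul & _). apply Mmul; [apply Fx|apply Fy]; auto.
Qed.

Lemma nclosure_inv x : N x -> N (inv x).
Proof.
  intros [Hx Fx]. split; [apply wf_inv; auto|].
  intros M HM HS. pose proof HM as (_ & _ & _ & Minv & _). apply Minv, Fx; auto.
Qed.

Lemma nclosure_conj x y : N x -> wf 0 y -> N (mul (mul (inv y) x) y).
Proof.
  intros [Hx Fx] Hy. split; [simpl; wf_solve|].
  intros M HM HS. pose proof HM as (_ & _ & _ & _ & Mconj & _). apply Mconj; [apply Fx|]; auto.
Qed.

Lemma nclosure_eqv x y : N x -> wf 0 y -> eqv x y -> N y.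
Proof.
  intros [Hx Fx] Hy E. split; auto.
  intros M HM HS. pose proof HM as (_ & _ & _ & _ & _ & Meqv). apply (Meqv x); [apply Fx| |]; auto.
Qed.

Lemma aeqv_of_eqv x y : wf 0 x -> wf 0 y -> eqv x y -> aeqv x y.
Proof.
  intros Hx Hy E. apply nclosure_eqv with one; [apply nclosure_one|wf_solve|].
  apply eqv_sym, (eqv_trans 0) with (mul y (inv y)); [wf_solve| |].
  - apply (eqv_mul 0); auto using wf_inv. apply (eqv_refl 0). auto using wf_inv.
  - apply (eqv_mul_inv_r 0); auto.
Qed.

Lemma aeqv_sym x y : wf 0 x -> wf 0 y -> aeqv x y -> aeqv y x.
Proof.
  intros Hx Hy Exy. apply nclosure_eqv with (inv (mul x (inv y)));
    [apply nclosure_inv; auto|wf_solve|].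
  eqv_by_restr 0. rewrite inv_list_app, inv_list_involutive. apply fp_eq_refl.
Qed.

Lemma aeqv_trans x y z : wf 0 x -> wf 0 y -> wf 0 z -> aeqv x y -> aeqv y z -> aeqv x z.
Proof.
  intros Hx Hy Hz Exy Eyz.
  apply nclosure_eqv with (mul (mul x (inv y)) (mul y (inv z)));
    [apply nclosure_mul; auto|wf_solve|].
  eqv_by_restr 0. rewrite <- !app_assoc. apply fp_eq_app_l, fp_eq_cancel_l.
Qed.

(* x y (x' y')^-1 = (x^-1)^-1 (y y'^-1) x^-1 . x x'^-1 *)
Lemma aeqv_mul x x' y y' : wf 0 x -> wf 0 x' -> wf 0 y -> wf 0 y' ->
  aeqv x x' -> aeqv y y' -> aeqv (mul x y) (mul x' y').
Proof.
  intros Hx Hx' Hy Hy' Ex Ey.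
  apply nclosure_eqv with (mul (mul (mul (inv (inv x)) (mul y (inv y'))) (inv x)) (mul x (inv x')));
    [apply nclosure_mul, Ex; apply nclosure_conj; auto using wf_inv|wf_solve|].
  eqv_by_restr 0.
  rewrite !inv_list_app, !inv_list_involutive, <- !app_assoc.
  do 3 apply fp_eq_app_l. apply fp_eq_cancel_l.
Qed.

Lemma aeqv_inv x x' : wf 0 x -> wf 0 x' -> aeqv x x' -> aeqv (inv x) (inv x').
Proof.
  intros Hx Hx' Ex.
  apply nclosure_eqv with (mul (mul (inv x) (inv (mul x (inv x')))) x);
    [apply nclosure_conj, Hx; apply nclosure_inv, Ex|wf_solve|].
  eqv_by_restr 0.
  rewrite !inv_list_app, !inv_list_involutive, <- !app_assoc.
  apply fp_eq_app_l, fp_eq_cancel_tail.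
Qed.

Lemma archipelago_is_group : is_group (archipelago G).
Proof.
  unfold is_group; simpl.
  split; [apply wf_one|].
  split; [intros; apply wf_mul; auto|].
  split; [intros; apply wf_inv; auto|].
  split; [intros; apply aeqv_of_eqv; auto; apply (eqv_refl 0); auto|].
  split; [intros; apply aeqv_sym; auto|].
  split; [intros x y z Hx Hy Hz; apply (aeqv_trans x y z); auto|].
  split; [intros; apply aeqv_mul; auto|].
  split; [intros; apply aeqv_inv; auto|].
  split; [intros; apply aeqv_of_eqv; auto using wf_mul; apply (eqv_mulA 0); auto|].
  split; [intros; apply aeqv_of_eqv; auto using wf_mul, wf_one; apply (eqv_mul1 0); auto|].
  intros; apply aeqv_of_eqv; auto using wf_mul, wf_one, wf_inv. apply (eqv_mulV 0); auto.
Qed.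

(* With y = A p B: removing p gives A B, and A B (A p B)^-1 = A p^-1 A^-1 is
   a conjugate of the one-letter word p^-1. *)
Lemma aeqv_remove_letter y p : wf 0 y -> aeqv (sub y (fun l => l <> p)) y.
Proof.
  intros Hy.
  set (A := sub y (fun l => ilt y l p)). set (B := sub y (fun l => ilt y p l)).
  set (c := single (iw y p)).
  assert (HA : wf 0 A) by (apply wf_sub; auto).
  assert (HB : wf 0 B) by (apply wf_sub; auto).
  assert (Hc : wf 0 c) by (apply wf_single; [apply (wf_nontrivial _ _ Hy)|lia]).
  apply aeqv_trans with (mul A B); auto using wf_sub, wf_mul.
  { apply aeqv_of_eqv, eqv_sym, (eqv_remove_split 0); auto using wf_sub, wf_mul. }
  apply nclosure_eqv with (mul (mul (inv (inv A)) (inv c)) (inv A));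
    [|wf_solve|].
  - apply nclosure_conj; auto using wf_inv. apply nclosure_inv, nclosure_of_free; auto.
    exists c. split; [|split]; auto.
    + exists [tt]. intros []. left. reflexivity.
    + apply (eqv_refl 0), Hc.
  - apply (eqv_trans 0) with (mul (mul A B) (inv (mul A (mul c B))));
      [wf_solve| |].
    + eqv_by_restr 0.
      rewrite !inv_list_app, !inv_list_involutive, <- !app_assoc.
      apply fp_eq_app_l, fp_eq_sym. rewrite app_assoc. apply (fp_eq_app_r _ _ []), fp_eq_mul_inv_r.
    + apply (eqv_mul 0); auto using wf_mul, wf_inv.
      * apply (eqv_refl 0). auto using wf_mul.
      * apply (eqv_inv 0); auto using wf_mul. apply (eqv_split_at 0), Hy.
Qed.

Lemma aeqv_remove_letters x L : wf 0 x -> aeqv (sub x (fun l => ~ In l L)) x.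
Proof.
  intros Hx. induction L as [|p L IH].
  - apply aeqv_of_eqv; auto using wf_sub. apply (eqv_sub_all 0); auto.
  - apply aeqv_trans with (sub x (fun l => ~ In l L)); auto using wf_sub.
    destruct (classic (In p L)) as [Hp|Hp].
    { apply aeqv_of_eqv; auto using wf_sub. apply (eqv_sub_ext 0); auto.
      intro l. simpl. split; [auto|]. intros H1 [<-|H2]; auto. }
    set (p' := exist (fun l => ~ In l L) p Hp : ipos (sub x (fun l => ~ In l L))).
    apply aeqv_trans with (sub (sub x (fun l => ~ In l L)) (fun z => z <> p'));
      auto using wf_sub.
    + apply aeqv_of_eqv, eqv_sym, (eqv_sub_sub 0); auto using wf_sub.
      * intros l H1 H2. apply H1. right. exact H2.
      * intros l h. simpl. split.
        -- intros H1 [<-|H2]; [|contradiction]. apply H1, sig_ext. reflexivity.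
        -- intros H1 E. apply H1. left. symmetry. exact (f_equal (@proj1_sig _ _) E).
    + apply aeqv_remove_letter. apply wf_sub, Hx.
Qed.

Lemma aeqv_delete k x : wf k x -> aeqv (delete k x) x.
Proof.
  intros Hk. assert (Hx : wf 0 x) by (apply (wf_weaken 0 k); auto; lia).
  destruct (wf_finite_index _ _ Hk k) as [s Hs].
  set (L := filter (fun l => Nat.eqb (lidx (iw x l)) k) s).
  assert (Hdel : wf 0 (delete k x)) by apply wf_sub, Hx.
  apply aeqv_trans with (sub x (fun l => ~ In l L)); auto using wf_sub, aeqv_remove_letters.
  apply aeqv_of_eqv; auto using wf_sub. apply (eqv_sub_ext 0); auto.
  intro l. unfold L. rewrite filter_In, Nat.eqb_eq. split.
  - intros H1 [_ H2]. auto.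
  - intros H1 H2. apply H1. auto.
Qed.

Fixpoint undeleted (k : nat) (x : W) (ls : list (ipos x)) : list (ipos (delete k x)) :=
  match ls with
  | [] => []
  | l :: r => match Nat.eq_dec (lidx (iw x l)) k with
              | left _ => undeleted k x r
              | right h => exist _ l h :: undeleted k x r
              end
  end.

Lemma in_undeleted k x ls z : In z (undeleted k x ls) <-> In (proj1_sig z) ls.
Proof.
  induction ls as [|l r IH]; simpl. tauto.
  destruct (Nat.eq_dec (lidx (iw x l)) k) as [E|E]; simpl; rewrite IH.
  - split; auto. intros [Hl|]; auto. rewrite Hl in E. destruct (proj2_sig z E).
  - split; (intros [H|H]; [left|right]; auto).
    + rewrite <- H. reflexivity.
    + apply sig_ext, H.
Qed.

Lemma undeleted_sorted k x ls : StronglySorted (ilt x) ls ->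
  StronglySorted (ilt (delete k x)) (undeleted k x ls).
Proof.
  induction ls as [|l r IH]; simpl; intros S. constructor.
  apply StronglySorted_inv in S as [S Fl]. rewrite Forall_forall in Fl.
  destruct (Nat.eq_dec (lidx (iw x l)) k); auto.
  constructor; auto. apply Forall_forall. intros z Hz. apply in_undeleted in Hz. simpl. auto.
Qed.

Lemma undeleted_letters k x ls :
  map (iw (delete k x)) (undeleted k x ls) = drop_index k (map (iw x) ls).
Proof.
  induction ls as [|l r IH]; simpl; auto.
  unfold drop_index in *; simpl.
  destruct (Nat.eq_dec (lidx (iw x l)) k) as [E|E].
  - rewrite E, Nat.eqb_refl. exact IH.
  - rewrite (proj2 (Nat.eqb_neq _ _) E). simpl. f_equal. exact IH.
Qed.

Lemma restr_delete k x m s : restr x m s -> restr (delete k x) m (drop_index k s).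
Proof.
  intros [ls [S [E ->]]]. exists (undeleted k x ls). split; [|split].
  - apply undeleted_sorted, S.
  - intro z. rewrite in_undeleted. apply E.
  - symmetry. apply undeleted_letters.
Qed.

Lemma delete_is_hom k : is_hom (topprod G k) (topprod G (S k)) (delete k).
Proof.
  simpl. split; [|split].
  - intros x Hx. apply wf_delete, Hx.
  - intros x y Hx Hy E. apply (eqv_of_restr (S k)); auto using wf_delete.
    intro m. destruct (restr_exists _ _ Hx m) as [s Hs], (restr_exists _ _ Hy m) as [t Ht].
    exists (drop_index k s), (drop_index k t). split; [|split]; auto using restr_delete.
    apply fp_eq_drop_index. eauto.
  - intros x y Hx Hy. simpl. apply (eqv_of_restr (S k)); auto using wf_delete, wf_mul.
    intro m. destruct (restr_exists _ _ Hx m) as [s Hs], (restr_exists _ _ Hy m) as [t Ht].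
    exists (drop_index k (s ++ t)), (drop_index k s ++ drop_index k t).
    split; [|split]; auto using restr_delete, restr_mul.
    unfold drop_index. rewrite filter_app. apply fp_eq_refl.
Qed.

Lemma inclusion_is_hom k : is_hom (topprod G k) (archipelago G) (fun w => w).
Proof.
  assert (H0 : forall x, wf k x -> wf 0 x) by (intros x; apply wf_weaken; lia).
  simpl. split; [|split].
  - auto.
  - intros x y Hx Hy E. apply aeqv_of_eqv; auto.
  - intros x y Hx Hy. apply aeqv_of_eqv; wf_solve; auto. apply (eqv_refl 0). wf_solve; auto.
Qed.

Fixpoint delete_below (j : nat) (v : W) : W :=
  match j with 0 => v | S j => delete j (delete_below j v) end.

Lemma wf_delete_below j v : wf 0 v -> wf j (delete_below j v).
Proof. intro Hv. induction j; simpl; auto using wf_delete. Qed.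

Lemma delete_below_letter j v (z : ipos (delete_below j v)) :
  exists l : ipos v, iw (delete_below j v) z = iw v l.
Proof.
  induction j as [|j IH]; simpl in *; [eauto|].
  destruct z as [z h]. apply IH.
Qed.

Section UniversalProperty.
Variables (H : PreGrp) (f : forall k, pcar (topprod G k) -> pcar H).
Hypotheses (HH : is_group H) (Hf : forall k, is_hom (topprod G k) H (f k))
  (Hc : forall k x, pmem (topprod G k) x -> peqv H (f (S k) (delete k x)) (f k x)).
Local Notation e := (peqv H).

Lemma f_mem k x : wf k x -> pmem H (f k x).
Proof. apply (hom_mem _ _ _ (Hf k)). Qed.

Local Hint Resolve f_mem pmem_one wf_one wf_delete wf_delete_below : core.
Local Ltac via b := apply (peqv_trans _ HH _ b); auto.

Lemma f_delete_below j v : wf 0 v -> e (f j (delete_below j v)) (f 0 v).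
Proof.
  intro Hv. induction j as [|j IH]; simpl.
  - apply peqv_refl; auto.
  - via (f j (delete_below j v)). apply Hc, wf_delete_below, Hv.
Qed.

Lemma f0_free_trivial y : wf 0 y -> free_prod_class G y -> e (f 0 y) (pone H).
Proof.
  intros Hy [v [Hv [[s Hs] E]]].
  set (M := list_max (map (fun l => lidx (iw v l)) s)).
  assert (HM : forall l, lidx (iw v l) <= M).
  { intro l. pose proof (proj1 (list_max_le _ M) (le_n _)) as F. rewrite Forall_forall in F.
    apply F, (in_map (fun l => lidx (iw v l))), Hs. }
  set (D := delete_below (S M) v).
  assert (HD : wf (S M) D) by apply wf_delete_below, Hv.
  assert (ED : eqv D one).
  { apply (eqv_of_restr (S M)); auto using wf_one. intro m.
    exists [], []. split; [|split; [apply restr_one|apply fp_eq_refl]].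
    exists []. split; [constructor|]. split; [|reflexivity].
    intro l. split; [intros []|]. intros _. exfalso.
    destruct (delete_below_letter (S M) v l) as [l0 El].
    pose proof (wf_index_ge _ _ HD l) as X. pose proof (HM l0) as Y.
    fold D in El. rewrite El in X. lia. }
  via (f 0 v). { apply (hom_eqv _ _ _ (Hf 0)); auto. }
  via (f (S M) D). { apply (peqv_sym _ HH); auto. apply f_delete_below, Hv. }
  via (f (S M) one). { apply (hom_eqv _ _ _ (Hf (S M))); simpl; auto. }
  apply (hom_one _ _ _ (topprod_is_group (S M)) HH (Hf (S M))).
Qed.

Lemma f0_nclosure_trivial x : N x -> e (f 0 x) (pone H).
Proof.
  intros [Hx F].
  refine (proj2 (F (fun x => pmem (topprod G 0) x /\ e (f 0 x) (pone H)) _ _)).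
  - apply (hom_kernel_normal _ _ _ (topprod_is_group 0) HH (Hf 0)).
  - intros y Hy Fy. split; auto. apply f0_free_trivial; auto.
Qed.

(* A word of the k-th product has no letters from G_(k-1), so the bonding map
   into the k-th product fixes it. *)
Lemma f0_eqv_fk k x : wf k x -> e (f 0 x) (f k x).
Proof.
  revert x. induction k as [|k IH]; intros x Hx.
  - apply peqv_refl; auto.
  - assert (Hk : wf k x) by (apply (wf_weaken k (S k)); auto).
    assert (H0 : wf 0 x) by (apply (wf_weaken 0 k); auto; lia).
    via (f k x). via (f (S k) (delete k x)).
    + apply (peqv_sym _ HH); auto.
    + apply (hom_eqv _ _ _ (Hf (S k))); simpl; auto. apply (eqv_sub_all (S k)); auto.
      intro l. pose proof (wf_index_ge _ _ Hx l). lia.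
Qed.
End UniversalProperty.
End Words.

Theorem proposition14 (G : nat -> Group) :
  is_direct_limit (topprod G) (fun k => delete G k)
    (archipelago G) (fun k (w : infword G) => w).
Proof.
  split; [exact (topprod_is_group G)|].
  split; [exact (delete_is_hom G)|].
  split; [exact (archipelago_is_group G)|].
  split; [exact (inclusion_is_hom G)|].
  split; [intros k x Hx; exact (aeqv_delete G k x Hx)|].
  intros H f HH Hf Hc. exists (f 0). split; [|split].
  - split; [|split].
    + apply (hom_mem _ _ _ (Hf 0)).
    + intros x y Hx Hy E.
      apply (hom_eqv_of_kernel _ _ _ (topprod_is_group G 0) HH (Hf 0)); auto.
      exact (f0_nclosure_trivial G H f HH Hf Hc _ E).
    + apply (hom_mul _ _ _ (Hf 0)).
  - intros k x Hx. exact (f0_eqv_fk G H f HH Hf Hc k x Hx).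
  - intros u' _ Hu' y Hy. exact (Hu' 0 y Hy).
Qed.
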